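(* For every integer $N\ge1$, $u\in\mathbb{C}$ and $\tau$ with $\operatorname{Im}\tau>0$, $$(-i)^{N+1}e^{-\pi i(N-1)u}q^{\frac{(N-1)^2}{8N}}R\!\left(u;\tfrac\tau N\right)=\sum_{k=0}^{N-1}(-1)^ke^{-2\pi iku}q^{-\frac{k(k-N+1)}{2N}}R\!\left(Nu+k\tau-\tfrac{N-1}{2}\tau+\tfrac{N+1}{2};N\tau\right).$$
   Context: $q=e^{2\pi i\tau}$, $q^c:=e^{2\pi ic\tau}$. $E(x)=2\int_0^xe^{-\pi z^2}dz$. For $w\in\mathbb{C}$ and $\sigma$ with $\operatorname{Im}\sigma>0$, with $t=\operatorname{Im}\sigma$ and $a=\operatorname{Im}w/\operatorname{Im}\sigma$: $R(w;\sigma)=\sum_{\nu\in\mathbb{Z}+1/2}\{\operatorname{sgn}(\nu)-E((\nu+a)\sqrt{2t})\}(-1)^{\nu-1/2}e^{-2\pi i\nu w}e^{-\pi i\nu^2\sigma}$. *)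

From Stdlib Require Import Reals ZArith.
From Coquelicot Require Import Coquelicot.
Open Scope R_scope.

Definition cexp (z : C) : C :=
  (exp (Re z) * cos (Im z), exp (Re z) * sin (Im z)).

(* q^c := e^{2 pi i c tau} *)
Definition qpow (tau : C) (c : R) : C :=
  cexp (Cmult (Cmult (RtoC (2 * PI * c)) Ci) tau).

Definition Eerr (x : R) : R := 2 * RInt (fun z => exp (- PI * z ^ 2)) 0 x.

Definition sgn (x : R) : R :=
  if Rlt_dec 0 x then 1 else if Rlt_dec x 0 then -1 else 0.

Definition CSeries (f : nat -> C) : C :=
  (Series (fun m => Re (f m)), Series (fun m => Im (f m))).

Definition ZSeries (f : Z -> C) : C :=
  CSeries (fun m => Cplus (f (Z.of_nat m)) (f (- Z.of_nat (S m))%Z)).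

(* summand of R(w;sigma) indexed by nu = n + 1/2, n in Z *)
Definition Rterm (w sigma : C) (n : Z) : C :=
  let t := Im sigma in
  let a := Im w / Im sigma in
  let nu := IZR n + / 2 in
  Cmult (Cmult (RtoC (sgn nu - Eerr ((nu + a) * sqrt (2 * t))))
               (RtoC (powerRZ (-1) n)))
        (Cmult (cexp (Cmult (Cmult (RtoC (- 2 * PI * nu)) Ci) w))
               (cexp (Cmult (Cmult (RtoC (- PI * nu ^ 2)) Ci) sigma))).

Definition Rfun (w sigma : C) : C := ZSeries (Rterm w sigma).

(* The bilateral series R(u; tau/N) is split according to the residue of its index n modulo N,
   n = N m + k with 0 <= k < N.  For fixed k the (N m + k)-th term, multiplied by the
   prefactor on the left, is exactly the k-th prefactor on the right times the m-th term of
   R(N u + k tau - (N-1)/2 tau + (N+1)/2; N tau): the arguments of the error function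
   coincide, the signs of nu = n + 1/2 and of m + 1/2 agree, and the exponentials differ by
   a factor e^{2 pi i N m} = 1.  The rearrangement is justified by absolute convergence:
   since 1 - E(x) <= e^{-pi x^2} for x >= 0, which rests on the value 1/2 of the integral
   of e^{-pi z^2} over [0, +oo), the terms of R decay geometrically in |n|. *)

From Stdlib Require Import Reals ZArith Lra Lia.
From Coquelicot Require Import Coquelicot.
From mathcomp Require ssreflect ssrfun ssrbool eqtype ssrnat bigop ssralg ssrnum order.
From mathcomp Require boolp reals topology normedtype landau sequences.
From mathcomp Require derive realfun trigo exp lebesgue_integral ftc gauss_integral.
From mathcomp Require Rstruct Rstruct_topology.

(* MathComp-Analysis evaluates the Gaussian integral; this module transports the value to
   the Stdlib reals, identifying the two versions of [PI] and of derivatives. *)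
Module GaussianIntegral.
Import ssreflect ssrfun ssrbool eqtype ssrnat bigop ssralg ssrnum order.
Import boolp reals topology normedtype landau sequences.
Import derive realfun trigo exp lebesgue_integral ftc gauss_integral Rstruct Rstruct_topology.
Import Order.TTheory GRing.Theory Num.Theory numFieldNormedType.Exports.
Import gauss_integral_proof.
Local Open Scope classical_set_scope.
Local Open Scope ring_scope.

Lemma RcosE (x : R) : Rtrigo_def.cos x = cos x.
Proof.
rewrite /Rtrigo_def.cos; case: exist_cos => l.
rewrite /cos_in /Pser /infinite_sum => Hl.
have h2 : series (cos_coeff' x) @ \oo --> (l : R^o).
  rewrite -cvg_shiftS /=; apply/(@cvgrPdist_lt _ R^o) => /= e /RltP /Hl[N NH].
  near=> n.
  have nN : (n >= N)%coq_nat by apply/ssrnat.leP; near: n; exact: nbhs_infty_ge.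
  move: NH => /(_ _ nN) /[!RdistE] /RltP /=.
  rewrite distrC sum_f_R0E; congr (`| _ - _ | < e).
  apply: eq_bigr=> k _; rewrite /cos_n /cos_coeff' RpowE RpowE factE INRE.
  rewrite /Rsqr (_ : (x * x)%coqR = x ^+ 2); last by rewrite expr2.
  rewrite -exprM -mul2n.
  have -> : (2 * k)%coq_nat = (2 * k)%N by [].
  by rewrite mulrAC.
have h1 := @cvg_cos_coeff' _ x.
by rewrite -(cvg_lim (@Rhausdorff R) h1) -(cvg_lim (@Rhausdorff R) h2).
Unshelve. all: by end_near. Qed.

Local Lemma R2E : (2%:R : R) = 2%coqR.
Proof. by rewrite -INRE /=; lra. Qed.

(* Both constants are twice the unique zero of the cosine in [0, 2]. *)
Lemma RPIE : PI = pi.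
Proof.
have half : (PI / 2)%coqR = pi / 2.
  have PI4 := PI_4; have PI2 := PI2_RGT_0.
  apply: cos_02_uniq.
  - by apply/andP; split; apply/RleP; rewrite ?R2E; [exact: Rlt_le|lra].
  - by rewrite -RcosE; exact: cos_PI2.
  - exact: (@pihalf_02_cos_pihalf R).1.
  - exact: cos_pihalf.
rewrite (_ : PI = (PI / 2) * 2)%coqR; last by field.
by rewrite half -R2E RmultE mulfVK // pnatr_eq0.
Qed.

(* Stated over [RR], the lemmas below use the same normed-module instances as [ftc]. *)
Local Definition RR : realType := R.

Lemma derivable_pt_lim_derive {F : RR -> RR} {y l : RR} : derivable_pt_lim F y l ->
  derivable F y 1 /\ F^`() y = l.
Proof.
move=> Fyl.
have cvg_l : (fun h => h^-1 *: (F (h + y) - F y)) @ 0^' --> l.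
  apply/cvgrPdist_lt => e /RltP /Fyl [d dP].
  near=> h.
  have h0 : h <> 0 by apply/eqP; near: h; exact: nbhs_dnbhs_neq.
  have hd : (Rabs h < d)%coqR.
    apply/RltP; rewrite RabsE; near: h; apply: dnbhs0_lt; apply/RltP; exact: cond_pos.
  rewrite /GRing.scale /= mulrC -RdivE ?(introT eqP h0) // -RminusE -RabsE [(h + y)%R]addrC.
  by apply/RltP; rewrite Rabs_minus_sym -RminusE; exact: dP.
split; last exact: cvg_lim.
by apply/cvg_ex; exists l; under eq_fun do rewrite scaler1.
Unshelve. all: by end_near. Qed.

Lemma cvg_integral0_gauss : @integral0_gauss RR x @[x --> +oo] --> Num.sqrt pi / 2.
Proof.
have : Num.sqrt (@integral0_gauss RR x ^+ 2) @[x --> +oo] --> Num.sqrt (pi / 4).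
  by apply: continuous_cvg; [exact: sqrt_continuous|exact: cvg_integral0_gauss_sqr].
rewrite sqrtrM ?pi_ge0 // sqrtrV // (_ : 4 = 2 ^+ 2); last by rewrite expr2 -natrM.
rewrite sqrtr_sqr ger0_norm //; apply: cvg_trans; apply: near_eq_cvg; near=> x.
by rewrite sqrtr_sqr ger0_norm //; exact: integral0_gauss_ge0.
Unshelve. all: by end_near. Qed.

Lemma gauss_antiderivative_cvg (F : RR -> RR) : F 0 = 0 ->
  (forall y, derivable_pt_lim F y (Rtrigo_def.exp (- (y * y)))) ->
  forall eps, (0 < eps)%coqR ->
  exists M, forall x, (M <= x)%coqR -> (Rabs (F x - sqrt PI / 2) < eps)%coqR.
Proof.
move=> F0 dF.
have Fc y : continuity_pt F y by exact: (derivable_continuous_pt _ _ (exist _ _ (dF y))).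
have FTC x : 0 < x -> integral0_gauss x = F x.
  move=> x0; rewrite /integral0_gauss /Rintegral (@continuous_FTC2 RR gauss_fun F 0 x x0) ?F0.
  - by rewrite /= subr0.
  - by apply: continuous_subspaceT; exact: continuous_gauss_fun.
  - split.
    + by move=> y _; exact: (derivable_pt_lim_derive (dF y)).1.
    + by apply: cvg_at_right_filter; exact/continuity_pt_cvg.
    + by apply: cvg_at_left_filter; exact/continuity_pt_cvg.
  - move=> y _; rewrite (derivable_pt_lim_derive (dF y)).2 /gauss_fun RexpE.
    by rewrite expr2.
move=> e /RltP e0.
move/cvgrPdist_lt: cvg_integral0_gauss => /(_ e e0) [M [_ HM]].
exists (Num.max (M + 1) 1) => x /RleP; rewrite ge_max => /andP[xM x1].
have x0 : 0 < x by apply: lt_le_trans x1.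
have Mx : M < x by apply: lt_le_trans xM; rewrite ltrDl.
apply/RltP; rewrite RabsE RsqrtE RPIE RdivE -R2E distrC -FTC //; exact: HM.
Qed.

End GaussianIntegral.

Open Scope R_scope.

Lemma exp_le_compat x y : x <= y -> exp x <= exp y.
Proof. intros [H|H]; [left; apply exp_increasing | right; subst]; auto. Qed.

Lemma exp_ge_1 x : 0 <= x -> 1 <= exp x.
Proof. intros H; rewrite <- exp_0; apply exp_le_compat, H. Qed.

Lemma exp_mult_INR c n : exp (c * INR n) = exp c ^ n.
Proof.
induction n as [|n IH].
- simpl; rewrite Rmult_0_r; apply exp_0.
- rewrite S_INR, Rmult_plus_distr_l, Rmult_1_r, exp_plus, IH; simpl; ring.
Qed.

Definition gauss_pi (z : R) : R := exp (- PI * z ^ 2).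

Lemma gauss_pi_pos z : 0 < gauss_pi z.
Proof. apply exp_pos. Qed.

Lemma gauss_pi_add_le x y : 0 <= x -> 0 <= y ->
  gauss_pi (x + y) <= gauss_pi x * gauss_pi y.
Proof.
intros Hx Hy; unfold gauss_pi; rewrite <- exp_plus; apply exp_le_compat.
pose proof PI_RGT_0; assert (0 <= PI * (x * y)) by (apply Rmult_le_pos; nra); nra.
Qed.

Lemma continuous_gauss_pi z : continuous gauss_pi z.
Proof. apply (@ex_derive_continuous R_AbsRing R_NormedModule); unfold gauss_pi; auto_derive; auto. Qed.

Lemma ex_RInt_gauss_pi a b : ex_RInt gauss_pi a b.
Proof. apply (@ex_RInt_continuous R_CompleteNormedModule); intros; apply continuous_gauss_pi. Qed.

Lemma is_derive_RInt_gauss_pi x : is_derive (RInt gauss_pi 0) x (gauss_pi x).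
Proof.
apply is_derive_RInt with 0; [|apply continuous_gauss_pi].
apply filter_forall; intros b; apply RInt_correct, ex_RInt_gauss_pi.
Qed.

Lemma RInt_gauss_pi_cvg eps : 0 < eps ->
  exists M, forall x, M <= x -> Rabs (RInt gauss_pi 0 x - / 2) < eps.
Proof.
intros Heps.
set (s := sqrt PI).
assert (Hs : 0 < s) by apply sqrt_lt_R0, PI_RGT_0.
assert (Hs2 : s * s = PI) by apply sqrt_sqrt, Rlt_le, PI_RGT_0.
(* [x |-> s * RInt gauss_pi 0 (x / s)] is an antiderivative of [exp (- x^2)] *)
destruct (GaussianIntegral.gauss_antiderivative_cvg (fun x => s * RInt gauss_pi 0 (x / s)))
  with (eps * s) as [M HM].
- unfold Rdiv; rewrite Rmult_0_l, RInt_point; apply Rmult_0_r.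
- intros y; apply is_derive_Reals.
  replace (exp (- (y * y))) with (s * scal (/ s) (gauss_pi (y / s))).
  + apply is_derive_scal, (is_derive_comp (RInt gauss_pi 0) (fun x => x / s)).
    * apply is_derive_RInt_gauss_pi.
    * auto_derive; [auto | field; lra].
  + change (scal (/ s) (gauss_pi (y / s))) with (/ s * gauss_pi (y / s)).
    unfold gauss_pi.
    replace (- PI * (y / s) ^ 2) with (- (y * y)) by (rewrite <- Hs2; field; lra).
    field; lra.
- nra.
- exists (M / s); intros x Hx.
  assert (HMx : M <= x * s).
  { apply (Rmult_le_compat_r s) in Hx; [|lra].
    replace (M / s * s) with M in Hx by (field; lra); exact Hx. }
  specialize (HM _ HMx); fold s in HM.
  replace (x * s / s) with x in HM by (field; lra).
  replace (s * RInt gauss_pi 0 x - s / 2) with (s * (RInt gauss_pi 0 x - / 2)) in HM by field.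
  rewrite Rabs_mult, (Rabs_pos_eq s) in HM by lra.
  apply (Rmult_lt_reg_l s); nra.
Qed.

Lemma RInt_gauss_pi_shift_le x L : 0 <= x -> 0 <= L ->
  RInt gauss_pi x (x + L) <= gauss_pi x * RInt gauss_pi 0 L.
Proof.
intros Hx HL.
replace x with (1 * 0 + x) at 1 by ring; replace (x + L) with (1 * L + x) by ring.
change (gauss_pi x * RInt gauss_pi 0 L) with (scal (gauss_pi x) (RInt gauss_pi 0 L)).
rewrite <- RInt_comp_lin, <- RInt_scal by apply ex_RInt_gauss_pi.
apply RInt_le; auto.
- apply (@ex_RInt_continuous R_CompleteNormedModule); intros.
  unfold scal; simpl; unfold mult; simpl.
  apply (@ex_derive_continuous R_AbsRing R_NormedModule); unfold gauss_pi; auto_derive; auto.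
- apply (@ex_RInt_scal R_NormedModule), ex_RInt_gauss_pi.
- intros y [Hy _]; change (1 * gauss_pi (1 * y + x) <= gauss_pi x * gauss_pi y).
  rewrite Rmult_1_l, Rmult_1_l, Rplus_comm; apply gauss_pi_add_le; lra.
Qed.

(* Let [L] tend to [+oo] in [0 <= H (x + L) - H x <= gauss_pi x * H L],
   where [H] is the integral of [gauss_pi] from [0]. *)
Lemma RInt_gauss_pi_tail x : 0 <= x ->
  0 <= / 2 - RInt gauss_pi 0 x <= gauss_pi x / 2.
Proof.
intros Hx.
assert (Hshift : forall L, 0 <= L ->
  0 <= RInt gauss_pi 0 (x + L) - RInt gauss_pi 0 x <= gauss_pi x * RInt gauss_pi 0 L).
{ intros L HL.
  assert (Hc : RInt gauss_pi 0 (x + L) - RInt gauss_pi 0 x = RInt gauss_pi x (x + L)).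
  { rewrite <- (RInt_Chasles gauss_pi 0 x (x + L)) by apply ex_RInt_gauss_pi.
    unfold plus; simpl; ring. }
  rewrite Hc; split; [|now apply RInt_gauss_pi_shift_le].
  apply RInt_ge_0; [lra | apply ex_RInt_gauss_pi | intros; left; apply gauss_pi_pos]. }
assert (Hg : 0 < gauss_pi x <= 1).
{ split; [apply gauss_pi_pos|]. unfold gauss_pi; rewrite <- exp_0; apply exp_le_compat.
  pose proof PI_RGT_0; simpl; nra. }
split; apply Rle_plus_epsilon; intros eps Heps;
  destruct (RInt_gauss_pi_cvg (eps / 2)) as [M HM]; try lra;
  set (L := Rmax M 0);
  assert (HL : 0 <= L) by apply Rmax_r;
  assert (HML : M <= L) by apply Rmax_l;
  specialize (Hshift L HL);
  pose proof (HM (x + L) ltac:(lra)) as HxL; pose proof (HM L HML) as HL';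
  apply Rabs_def2 in HxL; apply Rabs_def2 in HL'.
- lra.
- assert (gauss_pi x * RInt gauss_pi 0 L <= gauss_pi x * / 2 + gauss_pi x * (eps / 2)).
  { rewrite <- Rmult_plus_distr_l; apply Rmult_le_compat_l; lra. }
  assert (gauss_pi x * (eps / 2) <= eps / 2).
  { rewrite <- (Rmult_1_l (eps / 2)) at 2; apply Rmult_le_compat_r; lra. }
  lra.
Qed.

Lemma Eerr_gauss_pi x : Eerr x = 2 * RInt gauss_pi 0 x.
Proof. reflexivity. Qed.

Lemma Eerr_opp x : Eerr (- x) = - Eerr x.
Proof.
rewrite !Eerr_gauss_pi.
pose proof (RInt_comp_lin gauss_pi (-1) 0 0 x (ex_RInt_gauss_pi _ _)) as H.
replace (-1 * 0 + 0) with 0 in H by ring; replace (-1 * x + 0) with (- x) in H by ring.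
rewrite <- H, (RInt_ext _ (fun y => scal (-1) (gauss_pi y))).
- pose proof (RInt_scal gauss_pi 0 x (-1) (ex_RInt_gauss_pi _ _)) as Hs.
  unfold scal in Hs |- *; simpl in Hs |- *; unfold mult in Hs |- *; simpl in Hs |- *.
  rewrite Hs; ring.
- intros y _; unfold gauss_pi; do 3 f_equal; ring.
Qed.

Lemma Eerr_tail x : 0 <= x -> 0 <= 1 - Eerr x <= gauss_pi x.
Proof. intros Hx; pose proof (RInt_gauss_pi_tail x Hx); rewrite Eerr_gauss_pi; lra. Qed.

Lemma Eerr_nonneg x : 0 <= x -> 0 <= Eerr x.
Proof.
intros Hx; rewrite Eerr_gauss_pi; apply Rmult_le_pos; [lra|].
apply RInt_ge_0; [lra | apply ex_RInt_gauss_pi | intros; left; apply gauss_pi_pos].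
Qed.

Lemma Rabs_Eerr_le x : Rabs (Eerr x) <= 1.
Proof.
destruct (Rle_or_lt 0 x) as [Hx|Hx].
- pose proof (Eerr_tail x Hx); pose proof (Eerr_nonneg x Hx).
  rewrite Rabs_pos_eq; lra.
- replace x with (- - x) by ring; rewrite Eerr_opp, Rabs_Ropp.
  pose proof (Eerr_tail (- x)); pose proof (Eerr_nonneg (- x)).
  rewrite Rabs_pos_eq; lra.
Qed.

Lemma sgn_pos x : 0 < x -> sgn x = 1.
Proof. intros H; unfold sgn; destruct (Rlt_dec 0 x); [reflexivity | lra]. Qed.

Lemma sgn_neg x : x < 0 -> sgn x = -1.
Proof.
intros H; unfold sgn; destruct (Rlt_dec 0 x); [lra|].
destruct (Rlt_dec x 0); [reflexivity | lra].
Qed.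

Lemma sgn_sub_Eerr_bound nu a s : nu <> 0 -> 0 <= s ->
  Rabs (sgn nu - Eerr ((nu + a) * s)) <=
  2 * exp (PI * a ^ 2 * s ^ 2) * exp (- PI * ((nu + a) * s) ^ 2).
Proof.
intros Hnu Hs.
assert (Hpos : forall nu a, 0 < nu -> Rabs (1 - Eerr ((nu + a) * s)) <=
          2 * exp (PI * a ^ 2 * s ^ 2) * exp (- PI * ((nu + a) * s) ^ 2)).
{ clear nu a Hnu; intros nu a Hnu.
  set (x := (nu + a) * s).
  pose proof PI_RGT_0.
  assert (Hc : 1 <= exp (PI * a ^ 2 * s ^ 2))
    by (apply exp_ge_1; apply Rmult_le_pos; [apply Rmult_le_pos|]; simpl; nra).
  pose proof (exp_pos (- PI * x ^ 2)).
  destruct (Rle_or_lt 0 x) as [Hx|Hx].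
  - pose proof (Eerr_tail x Hx) as Ht; unfold gauss_pi in Ht.
    rewrite Rabs_pos_eq by lra; nra.
  - (* then [0 < nu < - a], so [x^2 <= (a s)^2] and the Gaussian factors are at least 1 *)
    assert (Hx2 : x ^ 2 <= a ^ 2 * s ^ 2).
    { unfold x; assert (nu + a < 0) by (destruct (Rle_or_lt 0 (nu + a)); auto; unfold x in Hx; nra).
      replace (((nu + a) * s) ^ 2) with ((nu + a) ^ 2 * s ^ 2) by ring.
      apply Rmult_le_compat_r; simpl; nra. }
    assert (1 <= exp (PI * a ^ 2 * s ^ 2) * exp (- PI * x ^ 2)).
    { rewrite <- exp_plus; apply exp_ge_1; nra. }
    pose proof (Rabs_Eerr_le x) as HE; apply Rabs_le_between in HE.
    apply Rabs_le; lra. }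
destruct (Rlt_or_le 0 nu) as [Hp|Hn].
- rewrite sgn_pos by exact Hp; apply Hpos, Hp.
- rewrite sgn_neg by lra.
  replace ((nu + a) * s) with (- ((- nu + - a) * s)) by ring.
  rewrite Eerr_opp, <- Rabs_Ropp.
  replace (- (-1 - - Eerr ((- nu + - a) * s))) with (1 - Eerr ((- nu + - a) * s)) by ring.
  replace (a ^ 2) with ((- a) ^ 2) by ring.
  replace ((- ((- nu + - a) * s)) ^ 2) with (((- nu + - a) * s) ^ 2) by ring.
  apply Hpos; lra.
Qed.

Lemma sum_n_add (a : nat -> R) n m :
  sum_n a (n + S m) = sum_n a n + sum_n (fun k => a (S n + k)%nat) m.
Proof.
induction m as [|m IH].
- rewrite Nat.add_1_r, sum_Sn, sum_O, Nat.add_0_r; reflexivity.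
- rewrite Nat.add_succ_r, sum_Sn, IH, sum_Sn; unfold plus; simpl.
  rewrite Nat.add_succ_r; ring.
Qed.

Lemma sum_n_rev (a : nat -> R) n : sum_n (fun k => a (n - k)%nat) n = sum_n a n.
Proof.
revert a; induction n as [|n IH]; intros a.
- rewrite !sum_O; reflexivity.
- rewrite sum_Sn, Nat.sub_diag.
  rewrite (sum_n_ext_loc _ (fun k => a (S (n - k)))) by (intros; f_equal; lia).
  rewrite (IH (fun k => a (S k))).
  rewrite <- (Nat.add_0_l (S n)), sum_n_add, sum_O; unfold plus; simpl; ring.
Qed.

Lemma sum_n_blocks (a : nat -> R) p M :
  sum_n a (p + S p * M) = sum_n (fun m => sum_n (fun k => a (S p * m + k)%nat) p) M.
Proof.
induction M as [|M IH].
- rewrite Nat.mul_0_r, Nat.add_0_r, sum_O; apply sum_n_ext; intros k; f_equal; lia.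
- replace (p + S p * S M)%nat with (p + S p * M + S p)%nat by lia.
  rewrite sum_n_add, IH, sum_Sn; unfold plus; simpl; f_equal.
  apply sum_n_ext; intros k; f_equal; lia.
Qed.

Lemma is_series_sum_n (b : nat -> nat -> R) (l : nat -> R) p :
  (forall k, (k <= p)%nat -> is_series (b k) (l k)) ->
  is_series (fun m => sum_n (fun k => b k m) p) (sum_n l p).
Proof.
induction p as [|p IH]; intros Hb.
- rewrite sum_O; apply (is_series_ext (b 0%nat)); [intros; rewrite sum_O; reflexivity | auto].
- rewrite sum_Sn; apply (is_series_ext (fun m => plus (sum_n (fun k => b k m) p) (b (S p) m))).
  + intros; rewrite sum_Sn; reflexivity.
  + apply (@is_series_plus R_AbsRing R_NormedModule); auto.
Qed.

Lemma Series_blocks (a : nat -> R) (b : nat -> nat -> R) p :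
  ex_series a -> (forall k, (k <= p)%nat -> ex_series (b k)) ->
  (forall M, sum_n (fun k => a (S p * M + k)%nat) p = sum_n (fun k => b k M) p) ->
  Series a = sum_n (fun k => Series (b k)) p.
Proof.
intros Ha Hb Hab.
set (c M := sum_n (fun k => b k M) p).
assert (Hc : is_series c (sum_n (fun k => Series (b k)) p))
  by (apply is_series_sum_n; intros k Hk; apply Series_correct, Hb, Hk).
assert (Hsub : is_lim_seq (fun M => sum_n a (p + S p * M)) (Series a)).
{ apply (is_lim_seq_subseq (sum_n a) _ (fun M => p + S p * M)%nat).
  - intros P [N HP]; exists N; intros n Hn; apply HP; nia.
  - apply Series_correct, Ha. }
apply (is_lim_seq_ext _ (sum_n c)) in Hsub.
- apply is_lim_seq_unique in Hsub.
  rewrite <- (is_series_unique c _ Hc); unfold Series; rewrite Hsub; reflexivity.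
- intros M; rewrite sum_n_blocks; apply sum_n_ext; intros m; apply Hab.
Qed.

Lemma pow_le_antimono r a b : 0 <= r <= 1 -> (b <= a)%nat -> r ^ a <= r ^ b.
Proof.
intros Hr Hba; induction Hba as [|a _ IH]; [lra|].
simpl; pose proof (pow_le r a (proj1 Hr)); nra.
Qed.

Definition Zpair (g : Z -> R) (m : nat) : R := g (Z.of_nat m) + g (- Z.of_nat (S m))%Z.

Lemma ex_series_Zpair (g : Z -> R) K r : 0 <= r < 1 ->
  (forall n, Rabs (g n) <= K * r ^ Z.abs_nat n) -> ex_series (Zpair g).
Proof.
intros Hr Hg.
assert (HK : 0 <= K) by (specialize (Hg 0%Z); simpl in Hg; pose proof (Rabs_pos (g 0%Z)); lra).
apply (ex_series_le (Zpair g) (fun m => 2 * K * r ^ m)).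
- intros m; change (Rabs (Zpair g m) <= 2 * K * r ^ m).
  eapply Rle_trans; [apply Rabs_triang|].
  pose proof (Hg (Z.of_nat m)) as H1; pose proof (Hg (- Z.of_nat (S m))%Z) as H2.
  rewrite Zabs2Nat.id in H1; replace (Z.abs_nat (- Z.of_nat (S m))) with (S m) in H2 by lia.
  pose proof (pow_le_antimono r (S m) m ltac:(lra) ltac:(lia)).
  assert (K * r ^ S m <= K * r ^ m) by (apply Rmult_le_compat_l; lra); lra.
- apply (ex_series_ext (fun m => scal (2 * K) (r ^ m))); [reflexivity|].
  apply (@ex_series_scal_l R_AbsRing R_NormedModule), ex_series_geom; rewrite Rabs_pos_eq; lra.
Qed.

Lemma Series_Zpair_residues (g : Z -> R) K r p : 0 <= r < 1 ->
  (forall n, Rabs (g n) <= K * r ^ Z.abs_nat n) ->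
  Series (Zpair g) =
  sum_n (fun k => Series (Zpair (fun m => g (Z.of_nat (S p) * m + Z.of_nat k)%Z))) p.
Proof.
intros Hr Hg.
assert (HK : 0 <= K) by (specialize (Hg 0%Z); simpl in Hg; pose proof (Rabs_pos (g 0%Z)); lra).
apply Series_blocks.
- apply (ex_series_Zpair g K r Hr Hg).
- intros k Hk; apply (ex_series_Zpair _ K r Hr); intros m.
  eapply Rle_trans; [apply Hg|]; apply Rmult_le_compat_l; [exact HK|].
  apply pow_le_antimono; [lra | nia].
- intros M; unfold Zpair.
  rewrite (sum_n_plus (fun k => g (Z.of_nat (S p * M + k)))),
    (sum_n_plus (fun k => g (Z.of_nat (S p) * Z.of_nat M + Z.of_nat k)%Z)).
  f_equal.
  + apply sum_n_ext; intros k; f_equal; lia.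
  + (* in a block, the negative indices meet the residue classes in reverse order *)
    rewrite <- sum_n_rev; apply sum_n_ext_loc; intros k Hk; f_equal; lia.
Qed.

Definition geom_bounded (f : Z -> C) (K r : R) : Prop :=
  forall n, Cmod (f n) <= K * r ^ Z.abs_nat n.

Lemma im_le_Cmod z : Rabs (Im z) <= Cmod z.
Proof.
unfold Cmod; rewrite <- sqrt_Rsqr_abs; apply sqrt_le_1_alt.
unfold Rsqr, Im; simpl; pose proof (pow2_ge_0 (fst z)); simpl in *; nra.
Qed.

Lemma geom_bounded_scal c f K r :
  geom_bounded f K r -> geom_bounded (fun n => Cmult c (f n)) (Cmod c * K) r.
Proof.
intros Hf n; rewrite Cmod_mult, Rmult_assoc.
apply Rmult_le_compat_l; [apply Cmod_ge_0 | apply Hf].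
Qed.

Lemma ZSeries_Zpair f :
  ZSeries f = (Series (Zpair (fun n => Re (f n))), Series (Zpair (fun n => Im (f n)))).
Proof. reflexivity. Qed.

Lemma ZSeries_ext f g : (forall n, f n = g n) -> ZSeries f = ZSeries g.
Proof. intros H; unfold ZSeries, CSeries; f_equal; apply Series_ext; intros; rewrite !H; reflexivity. Qed.

Lemma Re_sum_n (F : nat -> C) n : Re (sum_n F n) = sum_n (fun k => Re (F k)) n.
Proof. induction n as [|n IH]; [rewrite !sum_O | rewrite !sum_Sn, <- IH]; reflexivity. Qed.

Lemma Im_sum_n (F : nat -> C) n : Im (sum_n F n) = sum_n (fun k => Im (F k)) n.
Proof. induction n as [|n IH]; [rewrite !sum_O | rewrite !sum_Sn, <- IH]; reflexivity. Qed.

Section GeomBoundedZSeries.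

Variables (f : Z -> C) (K r : R).
Hypotheses (Hr : 0 <= r < 1) (Hf : geom_bounded f K r).

Let Re_bounded n : Rabs (Re (f n)) <= K * r ^ Z.abs_nat n.
Proof. eapply Rle_trans; [apply re_le_Cmod | apply Hf]. Qed.

Let Im_bounded n : Rabs (Im (f n)) <= K * r ^ Z.abs_nat n.
Proof. eapply Rle_trans; [apply im_le_Cmod | apply Hf]. Qed.

Lemma ZSeries_scal c : Cmult c (ZSeries f) = ZSeries (fun n => Cmult c (f n)).
Proof.
pose proof (ex_series_Zpair _ K r Hr Re_bounded) as HRe.
pose proof (ex_series_Zpair _ K r Hr Im_bounded) as HIm.
rewrite !ZSeries_Zpair; unfold Cmult at 1; simpl.
f_equal.
- rewrite <- !Series_scal_l, <- Series_minus
    by (apply (@ex_series_scal_l R_AbsRing R_NormedModule); assumption).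
  apply Series_ext; intros m; unfold Zpair, Re, Im; simpl; ring.
- rewrite <- !Series_scal_l, <- Series_plus
    by (apply (@ex_series_scal_l R_AbsRing R_NormedModule); assumption).
  apply Series_ext; intros m; unfold Zpair, Re, Im; simpl; ring.
Qed.

Lemma ZSeries_residues N : (1 <= N)%nat ->
  ZSeries f = sum_n (fun k => ZSeries (fun m => f (Z.of_nat N * m + Z.of_nat k)%Z)) (N - 1).
Proof.
intros HN; destruct N as [|p]; [lia|]; replace (S p - 1)%nat with p by lia.
rewrite ZSeries_Zpair; apply injective_projections; cbn [fst snd].
- change (fst ?z) with (Re z); rewrite Re_sum_n.
  apply (Series_Zpair_residues _ K r p Hr Re_bounded).
- change (snd ?z) with (Im z); rewrite Im_sum_n.
  apply (Series_Zpair_residues _ K r p Hr Im_bounded).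
Qed.

End GeomBoundedZSeries.

Lemma Cmod_cexp z : Cmod (cexp z) = exp (Re z).
Proof.
unfold Cmod, cexp, Re, Im; cbn [fst snd].
replace ((exp (fst z) * cos (snd z)) ^ 2 + (exp (fst z) * sin (snd z)) ^ 2)
  with (exp (fst z) ^ 2 * (Rsqr (sin (snd z)) + Rsqr (cos (snd z)))) by (unfold Rsqr; ring).
rewrite sin2_cos2, Rmult_1_r; apply sqrt_pow2, Rlt_le, exp_pos.
Qed.

Lemma Re_scal_Ci_mult r z : Re (Cmult (Cmult (RtoC r) Ci) z) = - r * Im z.
Proof. unfold Cmult, RtoC, Ci, Re, Im; simpl; ring. Qed.

Lemma Rabs_powerRZ_m1 n : Rabs (powerRZ (-1) n) = 1.
Proof.
destruct n; simpl.
- apply Rabs_R1.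
- apply pow_1_abs.
- rewrite Rabs_inv, pow_1_abs; apply Rinv_1.
Qed.

Lemma half_integer_neq_0 n : IZR n + / 2 <> 0.
Proof.
intros H; assert (H2 : IZR (2 * n) = IZR (-1)) by (rewrite mult_IZR; simpl; lra).
apply eq_IZR in H2; lia.
Qed.

Lemma half_integer_shift_sqr_ge n a :
  2 * INR (Z.abs_nat n) - 2 - 2 * Rabs a <= (IZR n + / 2 + a) ^ 2.
Proof.
set (y := IZR n + / 2 + a).
assert (Hn : INR (Z.abs_nat n) <= Rabs y + Rabs a + / 2).
{ rewrite INR_IZR_INZ, Zabs2Nat.id_abs, abs_IZR.
  replace (IZR n) with (y + - (a + / 2)) by (unfold y; ring).
  pose proof (Rabs_triang y (- (a + / 2))); pose proof (Rabs_triang a (/ 2)).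
  rewrite Rabs_Ropp in H; rewrite (Rabs_pos_eq (/ 2)) in H0 by lra; lra. }
pose proof (pow2_ge_0 (Rabs y - 1)).
rewrite <- (pow2_abs y); nra.
Qed.

Lemma Rterm_geom_bounded w sigma : 0 < Im sigma ->
  exists K r, 0 <= r < 1 /\ geom_bounded (Rterm w sigma) K r.
Proof.
intros Ht.
set (t := Im sigma) in *; set (a := Im w / t).
exists (2 * exp (PI * t * (a ^ 2 + 2 + 2 * Rabs a))), (exp (-2 * PI * t)); split.
{ split; [left; apply exp_pos|].
  rewrite <- exp_0; apply exp_increasing; pose proof PI_RGT_0; nra. }
intros n; unfold Rterm; cbv zeta; fold t a.
rewrite !Cmod_mult, !Cmod_R, Rabs_powerRZ_m1, !Cmod_cexp, !Re_scal_Ci_mult, Rmult_1_r.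
set (nu := IZR n + / 2); fold t.
assert (Hs2 : sqrt (2 * t) ^ 2 = 2 * t) by (apply pow2_sqrt; lra).
assert (Hw : Im w = a * t) by (unfold a; field; lra).
pose proof (sgn_sub_Eerr_bound nu a (sqrt (2 * t)) (half_integer_neq_0 n) (sqrt_pos _)) as HE.
pose proof (half_integer_shift_sqr_ge n a) as Hq; fold nu in Hq.
rewrite <- exp_mult_INR.
eapply Rle_trans.
{ apply Rmult_le_compat_r; [apply Rmult_le_pos; left; apply exp_pos | exact HE]. }
rewrite !Rmult_assoc, <- !exp_plus; apply Rmult_le_compat_l; [lra|]; apply exp_le_compat.
replace (((nu + a) * sqrt (2 * t)) ^ 2) with ((nu + a) ^ 2 * sqrt (2 * t) ^ 2) by ring.
rewrite Hs2, Hw; pose proof PI_RGT_0.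
assert (0 <= PI * t * ((nu + a) ^ 2 - (2 * INR (Z.abs_nat n) - 2 - 2 * Rabs a)))
  by (apply Rmult_le_pos; nra).
nra.
Qed.

Lemma Im_RtoC_mult r z : Im (Cmult (RtoC r) z) = r * Im z.
Proof. unfold Cmult, RtoC, Im; cbn [fst snd]; ring. Qed.

Lemma Im_div_RtoC z r : r <> 0 -> Im (Cdiv z (RtoC r)) = Im z / r.
Proof. intros Hr; unfold Cdiv, Cinv, Cmult, RtoC, Im; cbn [fst snd]; field; exact Hr. Qed.

Lemma cexp_add a b : Cmult (cexp a) (cexp b) = cexp (Cplus a b).
Proof.
unfold cexp, Cmult, Cplus, Re, Im; cbn [fst snd].
rewrite exp_plus, cos_plus, sin_plus; apply injective_projections; cbn [fst snd]; ring.
Qed.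

Lemma cos_PI_IZR n : cos (PI * IZR n) = powerRZ (-1) n.
Proof.
induction n as [|n IH|n IH] using Z.peano_ind.
- rewrite Rmult_0_r; apply cos_0.
- rewrite succ_IZR, <- Z.add_1_r, powerRZ_add, <- IH by lra.
  rewrite Rmult_plus_distr_l, Rmult_1_r, neg_cos; simpl; ring.
- replace (powerRZ (-1) (Z.pred n)) with (- powerRZ (-1) n).
  + rewrite <- IH; replace (PI * IZR n) with (PI * IZR (Z.pred n) + PI).
    * rewrite neg_cos; ring.
    * rewrite <- Z.sub_1_r, minus_IZR; ring.
  + replace n with (Z.pred n + 1)%Z at 1 by lia; rewrite powerRZ_add by lra; simpl; ring.
Qed.

Lemma RtoC_powerRZ_m1 n : RtoC (powerRZ (-1) n) = cexp (0, PI * IZR n).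
Proof.
unfold cexp, RtoC, Re, Im; cbn [fst snd].
rewrite exp_0, cos_PI_IZR, sin_eq_0_1 by (exists n; ring).
f_equal; ring.
Qed.

Lemma cexp_add_2PI_IZR z j : cexp (Cplus z (0, 2 * PI * IZR j)) = cexp z.
Proof.
rewrite <- cexp_add.
replace (0, 2 * PI * IZR j) with (Cplus (0, PI * IZR j) (0, PI * IZR j))
  by (unfold Cplus; f_equal; simpl; ring).
rewrite <- cexp_add, <- RtoC_powerRZ_m1, <- RtoC_mult.
replace (powerRZ (-1) j * powerRZ (-1) j) with 1.
- apply Cmult_1_r.
- change (1 = Rsqr (powerRZ (-1) j)); rewrite Rsqr_abs, Rabs_powerRZ_m1; unfold Rsqr; ring.
Qed.

Lemma Cpow_Copp_Ci n : Cpow (Copp Ci) n = cexp (0, - PI / 2 * INR n).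
Proof.
induction n as [|n IH].
- unfold cexp, Re, Im; apply injective_projections; simpl;
    rewrite Rmult_0_r, exp_0, ?cos_0, ?sin_0; ring.
- simpl Cpow; rewrite IH, S_INR.
  replace (0, - PI / 2 * (INR n + 1)) with (Cplus (0, - PI / 2) (0, - PI / 2 * INR n))
    by (unfold Cplus; f_equal; simpl; ring).
  rewrite <- cexp_add; f_equal.
  unfold cexp, Copp, Ci, Re, Im; cbn [fst snd]; rewrite exp_0.
  replace (- PI / 2) with (- (PI / 2)) by field.
  rewrite cos_neg, sin_neg, cos_PI2, sin_PI2; f_equal; ring.
Qed.

Definition Rterm_weight (w sigma : C) (n : Z) : R :=
  sgn (IZR n + / 2) - Eerr ((IZR n + / 2 + Im w / Im sigma) * sqrt (2 * Im sigma)).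

Definition Rterm_phase (w sigma : C) (n : Z) : C :=
  Cplus (Cplus (0, PI * IZR n) (Cmult (Cmult (RtoC (- 2 * PI * (IZR n + / 2))) Ci) w))
        (Cmult (Cmult (RtoC (- PI * (IZR n + / 2) ^ 2)) Ci) sigma).

Lemma Rterm_polar w sigma n :
  Rterm w sigma n = Cmult (RtoC (Rterm_weight w sigma n)) (cexp (Rterm_phase w sigma n)).
Proof.
unfold Rterm, Rterm_weight, Rterm_phase; cbv zeta.
rewrite RtoC_powerRZ_m1, <- !cexp_add; ring.
Qed.

Section Residues.

Variables (N : nat) (u tau : C).
Hypotheses (HN : (1 <= N)%nat) (Htau : 0 < Im tau).

Let w k := Cplus (Cplus (Cplus (Cmult (RtoC (INR N)) u) (Cmult (RtoC (INR k)) tau))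
                         (Copp (Cmult (RtoC ((INR N - 1) / 2)) tau)))
                  (RtoC ((INR N + 1) / 2)).

Lemma Rterm_weight_residue k m : (k <= N - 1)%nat ->
  Rterm_weight u (Cdiv tau (RtoC (INR N))) (Z.of_nat N * m + Z.of_nat k) =
  Rterm_weight (w k) (Cmult (RtoC (INR N)) tau) m.
Proof.
intros Hk; unfold Rterm_weight.
assert (HN' : 1 <= INR N) by (apply (le_INR 1); exact HN).
assert (Hk' : INR k <= INR N - 1)
  by (replace (INR N - 1) with (INR (N - 1)) by (rewrite minus_INR by exact HN; reflexivity);
      apply le_INR, Hk).
pose proof (pos_INR k).
rewrite plus_IZR, mult_IZR, <- !INR_IZR_INZ.
assert (Hw : Im (w k) = INR N * Im u + INR k * Im tau - (INR N - 1) / 2 * Im tau)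
  by (unfold w, Cplus, Cmult, Copp, RtoC, Im; cbn [fst snd]; ring).
rewrite Im_div_RtoC, Im_RtoC_mult, Hw by lra.
f_equal.
- (* [N m + k + 1/2] and [m + 1/2] have the same sign because [0 <= k < N] *)
  destruct (Z_le_gt_dec 0 m) as [Hm|Hm].
  + apply IZR_le in Hm; rewrite !sgn_pos; nra.
  + assert (Hm' : IZR m <= -1) by (apply IZR_le; lia).
    rewrite !sgn_neg; nra.
- assert (Hs : sqrt (2 * (INR N * Im tau)) = INR N * sqrt (2 * (Im tau / INR N))).
  { replace (2 * (INR N * Im tau)) with ((INR N * INR N) * (2 * (Im tau / INR N)))
      by (field; lra).
    rewrite sqrt_mult_alt, sqrt_square by nra; reflexivity. }
  rewrite Hs; f_equal; field; lra.
Qed.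

Lemma Rterm_residue k m : (k <= N - 1)%nat ->
  Cmult (Cmult (Cmult (Cpow (Copp Ci) (N + 1))
                      (cexp (Cmult (Cmult (RtoC (- PI * (INR N - 1))) Ci) u)))
               (qpow tau ((INR N - 1) ^ 2 / (8 * INR N))))
        (Rterm u (Cdiv tau (RtoC (INR N))) (Z.of_nat N * m + Z.of_nat k))
  = Cmult (Cmult (Cmult (RtoC ((-1) ^ k))
                        (cexp (Cmult (Cmult (RtoC (- 2 * PI * INR k)) Ci) u)))
                 (qpow tau (- (INR k * (INR k - INR N + 1)) / (2 * INR N))))
          (Rterm (w k) (Cmult (RtoC (INR N)) tau) m).
Proof.
intros Hk.
assert (HN' : 1 <= INR N) by (apply (le_INR 1); exact HN).
rewrite !Rterm_polar, Rterm_weight_residue by exact Hk.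
rewrite Cpow_Copp_Ci, (pow_powerRZ (-1) k), RtoC_powerRZ_m1; unfold qpow.
assert (collect : forall a b c d W,
  Cmult (Cmult (Cmult (cexp a) (cexp b)) (cexp c)) (Cmult W (cexp d)) =
  Cmult W (cexp (Cplus (Cplus (Cplus a b) c) d)))
  by (intros; rewrite <- !cexp_add; ring).
rewrite !collect; f_equal.
(* the two phases differ by [2 PI i N m] *)
symmetry; rewrite <- (cexp_add_2PI_IZR _ (Z.of_nat N * m)); f_equal.
unfold w, Rterm_phase, Cplus, Cmult, RtoC, Ci, Cdiv, Cinv, Copp.
rewrite !plus_IZR, !mult_IZR, <- !INR_IZR_INZ, plus_INR.
apply injective_projections; cbn [fst snd]; unfold Cmult, Cinv; cbn [fst snd];
  change (INR 1) with 1; replace (INR N ^ 2 + 0 ^ 2) with (INR N * INR N) by ring;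
  field; lra.
Qed.

End Residues.

Theorem lemma3p5 (N : nat) (u tau : C) (HN : (1 <= N)%nat) (Htau : 0 < Im tau) :
  Cmult (Cmult (Cmult (Cpow (Copp Ci) (N + 1))
                      (cexp (Cmult (Cmult (RtoC (- PI * (INR N - 1))) Ci) u)))
               (qpow tau ((INR N - 1) ^ 2 / (8 * INR N))))
        (Rfun u (Cdiv tau (RtoC (INR N))))
  =
  sum_n (fun k : nat =>
    Cmult (Cmult (Cmult (RtoC ((-1) ^ k))
                        (cexp (Cmult (Cmult (RtoC (- 2 * PI * INR k)) Ci) u)))
                 (qpow tau (- (INR k * (INR k - INR N + 1)) / (2 * INR N))))
          (Rfun (Cplus (Cplus (Cplus (Cmult (RtoC (INR N)) u) (Cmult (RtoC (INR k)) tau))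
                              (Copp (Cmult (RtoC ((INR N - 1) / 2)) tau)))
                       (RtoC ((INR N + 1) / 2)))
                (Cmult (RtoC (INR N)) tau)))
    (N - 1)%nat.
Proof.
assert (HN' : 1 <= INR N) by (apply (le_INR 1); exact HN).
assert (Hlo : 0 < Im (Cdiv tau (RtoC (INR N))))
  by (rewrite Im_div_RtoC by lra; apply Rdiv_lt_0_compat; lra).
assert (Hhi : 0 < Im (Cmult (RtoC (INR N)) tau))
  by (rewrite Im_RtoC_mult; apply Rmult_lt_0_compat; lra).
destruct (Rterm_geom_bounded u _ Hlo) as (K & r & Hr & HK).
unfold Rfun at 1; rewrite (ZSeries_scal _ K r Hr HK).
rewrite (ZSeries_residues _ _ r Hr (geom_bounded_scal _ _ _ _ HK) N HN).
apply sum_n_ext_loc; intros k Hk.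
erewrite ZSeries_ext by (intros m; apply (Rterm_residue N u tau HN Htau k m); lia).
edestruct Rterm_geom_bounded as (K' & r' & Hr' & HK'); [exact Hhi|].
unfold Rfun; rewrite (ZSeries_scal _ K' r' Hr' HK'); reflexivity.
Qed.
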